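(* Let $q$ be a power of an odd prime $p$, let $b\in\mathbb{F}_q$ with $b\ne0$, and let $n\ge2$ be an integer. Let $r\ge0$ be such that $p^r$ divides $n+1$ but $p^{r+1}$ does not, and let $m\ge0$ be defined by $n+1=p^r(m+1)$. Assume $r\ge1$. If $q>2m+4$, then there exists $a\in\mathbb{F}_q$ such that $\hat C_n(a,b)$ is LCD.
   Context: For $a,b\in\mathbb{F}_q$ and $n\ge 2$, $\hat T_n(a,b)$ denotes the $n\times n$ symmetric tridiagonal Toeplitz matrix over $\mathbb{F}_q$ with all diagonal entries equal to $a$, all entries on the first super- and sub-diagonals equal to $b$, and all other entries $0$. $\hat C_n(a,b)$ is the $[2n,n]$ linear code over $\mathbb{F}_q$ with generator matrix $[I_n\mid \hat T_n(a,b)]$. A linear code $C$ is LCD if $C\cap C^\perp=\{0\}$ (Euclidean dual). (The paper's statement writes $2^r$ here; it is interpreted via the characteristic $p$ as in Theorem 2.10, which the proof invokes.) *)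

From HB Require Import structures.
From mathcomp Require Import all_boot all_order all_algebra all_field.
Set Implicit Arguments. Unset Strict Implicit. Unset Printing Implicit Defensive.
Import GRing.Theory.
Local Open Scope ring_scope.

Definition tridiagT (F : fieldType) (n : nat) (a b : F) : 'M[F]_n :=
  \matrix_(i < n, j < n)
    if i == j then a
    else if ((i.+1 == j :> nat) || (j.+1 == i :> nat)) then b else 0.

(* generator matrix [I_n | \hat T_n(a,b)] of \hat C_n(a,b) *)
Definition genC (F : fieldType) (n : nat) (a b : F) : 'M[F]_(n, n + n) :=
  row_mx 1%:M (tridiagT n a b).

Definition in_code (F : fieldType) (k N : nat) (G : 'M[F]_(k, N)) (c : 'rV[F]_N) : Prop :=
  exists u : 'rV[F]_k, c = u *m G.

Definition in_dual (F : fieldType) (k N : nat) (G : 'M[F]_(k, N)) (c : 'rV[F]_N) : Prop :=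
  forall x : 'rV[F]_N, in_code G x -> x *m c^T = 0.

Definition LCD (F : fieldType) (k N : nat) (G : 'M[F]_(k, N)) : Prop :=
  forall c : 'rV[F]_N, in_code G c -> in_dual G c -> c = 0.

From HB Require Import structures.
From mathcomp Require Import all_boot all_order all_algebra all_field.
From mathcomp Require Import ring zify.
Set Implicit Arguments. Unset Strict Implicit. Unset Printing Implicit Defensive.
Import GRing.Theory.
Local Open Scope ring_scope.

(* The code generated by [I | T], T = \hat T_n(a,b) symmetric, is LCD as
   soon as I + T^2 is invertible, i.e. T^2 w = -w forces w = 0.  Over an
   extension L of F containing i with i^2 = -1, a nonzero w with T^2 w = -w
   yields an eigenvector of T for the eigenvalue i or -i, and any eigenvector
   of a tridiagonal Toeplitz matrix for mu forces U_{n+1}((mu - a)/b) = 0,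
   where U_k are the Chebyshev-type polynomials U_0 = 0, U_1 = 1,
   U_{k+2} = X U_{k+1} - U_k.  These satisfy X^{k+1} = U_{k+1} X - U_k modulo
   X^2 - tX + 1 (after evaluating at t); applying Frobenius to this
   congruence shows that in characteristic p, with q = p^r,
   U_{q(m+1)}(t) = U_{m+1}(t)^q U_q(t) and U_q(t) is a power of t^2 - 4 up to
   a unit, so U_{n+1}(t) = 0 implies that t is a root of
   V = U_{m+1} (X^2 - 4), which has at most m + 2 roots.  Excluding the at
   most 2m + 4 values of a for which (+-i - a)/b is a root of V leaves an
   admissible a because q > 2m + 4. *)

(* The Chebyshev-type polynomials U_k, with U_k(z + 1/z) = (z^k - z^-k)/(z - 1/z). *)
Fixpoint chebU (R : nzRingType) (k : nat) : {poly R} :=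
  match k with
  | 0 => 0
  | 1 => 1
  | (k'.+1 as k1).+1 => 'X * chebU R k1 - chebU R k'
  end.

Lemma chebUSS (R : nzRingType) k : chebU R k.+2 = 'X * chebU R k.+1 - chebU R k.
Proof. by []. Qed.

Lemma chebU_monic (R : nzRingType) k :
  chebU R k.+1 \is monic /\ size (chebU R k.+1) = k.+1.
Proof.
suff [] : (chebU R k.+1 \is monic /\ size (chebU R k.+1) = k.+1) /\
          (chebU R k.+2 \is monic /\ size (chebU R k.+2) = k.+2) by [].
elim: k => [|k [[_ size1] [mon2 size2]]].
  by rewrite chebUSS subr0 mulr1 monic1 monicX size_poly1 size_polyX.
have sizeX2 : size ('X * chebU R k.+2) = k.+3.
  by rewrite -commr_polyX size_mulX ?monic_neq0 // size2.
have lt_size : (size (- chebU R k.+1)%R < size ('X * chebU R k.+2)%R)%N.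
  by rewrite size_polyN sizeX2 size1.
split=> //; rewrite chebUSS size_polyDl // sizeX2 monicE lead_coefDl //.
by rewrite -commr_polyX lead_coefMX.
Qed.

Section ChebyshevAtPoint.
Variables (L : fieldType) (t : L).
Local Notation u k := (chebU L k).[t].

Lemma chebU_hornerSS k : u k.+2 = t * u k.+1 - u k.
Proof. by rewrite chebUSS hornerD hornerN hornerM hornerX. Qed.

Lemma chebU_recurrence (w : nat -> L) N : w 0%N = 0 ->
    (forall k, (k < N)%N -> w k.+2 = t * w k.+1 - w k) ->
  forall k, (k <= N.+1)%N -> w k = u k * w 1%N.
Proof.
move=> w0 rec.
have two_steps k : (k <= N)%N -> w k = u k * w 1%N /\ w k.+1 = u k.+1 * w 1%N.
  elim: k => [|k IH] le_kN; first by rewrite w0 /= horner0 hornerC mul0r mul1r.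
  have [IH1 IH2] := IH (ltnW le_kN).
  by split=> //; rewrite rec // IH1 IH2 chebU_hornerSS; ring.
move=> k; rewrite leq_eqVlt ltnS => /orP[/eqP -> | le_kN].
  exact: (two_steps N (leqnn N)).2.
exact: (two_steps k le_kN).1.
Qed.

(* X^2 - tX + 1, whose roots z satisfy z + 1/z = t. *)
Definition phi : {poly L} := 'X^2 - t%:P * 'X + 1.

Lemma size_phi : size phi = 3%N.
Proof.
rewrite /phi -addrA size_polyDl ?size_polyXn //.
rewrite (leq_ltn_trans (size_polyD _ _)) // gtn_max size_polyN size_poly1 andbT.
rewrite (leq_ltn_trans (size_polyMleq _ _)) // size_polyC size_polyX.
by case: (_ != _).
Qed.

Lemma Xpow_mod_phi k : phi %| 'X^(k.+1) - ((u k.+1)%:P * 'X - (u k)%:P).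
Proof.
elim: k => [|k IH].
  by rewrite /= hornerC horner0 expr1 mul1r subr0 subrr dvdp0.
have -> : 'X^(k.+2) - ((u k.+2)%:P * 'X - (u k.+1)%:P) =
   'X * ('X^(k.+1) - ((u k.+1)%:P * 'X - (u k)%:P)) + (u k.+1)%:P * phi.
  by rewrite chebU_hornerSS /phi polyCB polyCM exprS; ring.
by rewrite dvdp_add ?dvdp_mull // dvdpp.
Qed.

(* A polynomial of degree < 2 divisible by phi vanishes; we only need that
   its X-coefficient does. *)
Lemma phi_dvd_linear c d : phi %| c%:P * 'X + d%:P -> c = 0.
Proof.
move=> dvd; apply/eqP/negPn/negP => c_neq0.
have lin_neq0 : c%:P * 'X + d%:P != 0.
  by rewrite -size_poly_eq0 size_MXaddC polyC_eq0 (negbTE c_neq0).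
have := dvdp_leq lin_neq0 dvd.
by rewrite size_phi size_MXaddC polyC_eq0 (negbTE c_neq0) size_polyC c_neq0.
Qed.

(* Frobenius applied to X^{N+1} = U_{N+1} X - U_N mod phi, for q a power of
   the characteristic: U_{q(N+1)}(t) = U_{N+1}(t)^q U_q(t). *)
Lemma chebU_mul_pchar q N :
  [pchar L].-nat q -> u (q * N.+1) = u N.+1 ^+ q * u q.
Proof.
case: q => // q char_q; set q1 := q.+1 in char_q *.
have char_poly : [pchar {poly L}].-nat q1 by rewrite (eq_pnat _ (@pchar_poly L)).
have [k Ek] : exists k, (q1 * N.+1 = k.+1)%N by exists (q1 * N.+1).-1.
have frob_rem : ((u N.+1)%:P * 'X - (u N)%:P) ^+ q1 =
    (u N.+1 ^+ q1)%:P * 'X^q1 - (u N ^+ q1)%:P.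
  by rewrite exprDn_pchar // exprNn_pchar // exprMn !polyC_exp.
have dvd_pow : phi %| 'X^(q1 * N.+1) - ((u N.+1 ^+ q1)%:P *
    ((u q1)%:P * 'X - (u q)%:P) - (u N ^+ q1)%:P).
  have -> : 'X^(q1 * N.+1) - ((u N.+1 ^+ q1)%:P *
      ((u q1)%:P * 'X - (u q)%:P) - (u N ^+ q1)%:P) =
      ('X^(N.+1) ^+ q1 - ((u N.+1)%:P * 'X - (u N)%:P) ^+ q1)
      + (u N.+1 ^+ q1)%:P * ('X^q1 - ((u q1)%:P * 'X - (u q)%:P)).
    by rewrite frob_rem -exprM mulnC; ring.
  rewrite dvdp_add ?dvdp_mull ?Xpow_mod_phi //.
  by rewrite subrXX dvdp_mulr ?Xpow_mod_phi.
have := dvdp_sub dvd_pow (Xpow_mod_phi k); rewrite -Ek.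
have -> : 'X^(q1 * N.+1) - ((u N.+1 ^+ q1)%:P * ((u q1)%:P * 'X - (u q)%:P)
      - (u N ^+ q1)%:P) - ('X^(q1 * N.+1) - ((u (q1 * N.+1))%:P * 'X - (u k)%:P)) =
    (u (q1 * N.+1) - u N.+1 ^+ q1 * u q1)%:P * 'X
    + (u N.+1 ^+ q1 * u q + u N ^+ q1 - u k)%:P.
  by rewrite !(polyCB, polyCD, polyCM); ring.
by move/phi_dvd_linear/eqP; rewrite subr_eq0 => /eqP.
Qed.

(* For q = 2j + 1 a power of the characteristic, writing 2X = Y + t with
   Y^2 = t^2 - 4 mod phi, Frobenius gives 2^q U_q(t) = 2 (t^2 - 4)^j. *)
Lemma chebU_pchar_pow j :
  [pchar L].-nat j.*2.+1 -> 2 ^+ j.*2.+1 * u j.*2.+1 = 2 * (t ^+ 2 - 4) ^+ j.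
Proof.
set q := j.*2.+1 => char_q.
have char_poly : [pchar {poly L}].-nat q by rewrite (eq_pnat _ (@pchar_poly L)).
pose Y : {poly L} := 2%:P * 'X - t%:P; pose s := t ^+ 2 - 4.
have Y2 : Y ^+ 2 - s%:P = 4%:P * phi.
  by rewrite /Y /s /phi polyCB polyC_exp; ring.
have frobY : Y * (Y ^+ 2) ^+ j = 2%:P ^+ q * 'X^q - t%:P ^+ q.
  rewrite -exprM mul2n -exprS -/q -exprMn; apply/eqP; rewrite eq_sym subr_eq.
  by rewrite -exprDn_pchar //; apply/eqP; congr (_ ^+ _); rewrite /Y; ring.
have dvd_Y : phi %| Y * ((Y ^+ 2) ^+ j - s%:P ^+ j).
  by rewrite dvdp_mull // subrXX Y2 -mulrA dvdp_mull // dvdp_mulr.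
have := dvdp_sub dvd_Y (dvdp_mull (2%:P ^+ q) (Xpow_mod_phi j.*2)).
have -> : Y * ((Y ^+ 2) ^+ j - s%:P ^+ j) -
    2%:P ^+ q * ('X^(j.*2.+1) - ((u q)%:P * 'X - (u j.*2)%:P)) =
    (2 ^+ q * u q - 2 * s ^+ j)%:P * 'X + (t * s ^+ j - t ^+ q - 2 ^+ q * u j.*2)%:P.
  rewrite mulrBr frobY /Y.
  by rewrite !(polyCB, polyCD, polyCM, polyC_exp); ring.
by move/phi_dvd_linear/eqP; rewrite subr_eq0 => /eqP.
Qed.

Lemma chebU_pchar_root p r N : odd p -> p \in [pchar L] ->
  u (p ^ r * N.+1) = 0 -> root (chebU L N.+1 * ('X^2 - 4%:P)) t.
Proof.
move=> odd_p char_p; set q := (p ^ r)%N.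
have char_q : [pchar L].-nat q.
  by rewrite /q pnatX (eq_pnat _ (pcharf_eq char_p)) pnat_id ?orbT ?(pcharf_prime char_p).
have Eq : q = (q./2).*2.+1 by rewrite -[LHS](odd_double_half q) /q oddX odd_p orbT.
rewrite chebU_mul_pchar // => /eqP; rewrite mulf_eq0 expf_eq0 rootM.
case/orP => [/andP[_ /eqP uN0] | /eqP uq0]; first by rewrite /root uN0 eqxx.
have two_neq0 : (2 : L) != 0.
  apply: contraTneq odd_p => two0.
  have : (2 \in [pchar L])%N by rewrite inE /= two0 eqxx.
  by rewrite (pcharf_eq char_p) inE => /eqP <-.
have := @chebU_pchar_pow q./2; rewrite -Eq uq0 mulr0 => /(_ char_q) /esym/eqP.
rewrite mulf_eq0 (negbTE two_neq0) expf_eq0 => /andP[_ s0].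
by rewrite orbC rootE !(hornerD, hornerN, hornerXn, hornerC) s0.
Qed.

End ChebyshevAtPoint.

Section TridiagonalEigenvectors.
Variables (L : fieldType) (n : nat) (a b : L).
Local Notation T := (tridiagT n a b).

(* The entries of v, padded with a zero on each side: pad v 0 = 0,
   pad v (i+1) = v_i and pad v (n+1) = 0. *)
Definition pad (v : 'cV[L]_n) (k : nat) : L :=
  \sum_(i < n) (if i.+1 == k then v i 0 else 0).

Lemma pad_ord v (i : 'I_n) : pad v i.+1 = v i 0.
Proof.
rewrite /pad (bigD1 i) //= eqxx big1 ?addr0 // => k ne_ki.
by rewrite eqSS val_eqE (negbTE ne_ki).
Qed.

Lemma pad0 v : pad v 0 = 0.
Proof. by rewrite /pad big1. Qed.

Lemma pad_last v : pad v n.+1 = 0.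
Proof. by rewrite /pad big1 // => i _; rewrite eqSS ltn_eqF. Qed.

Lemma tridiag_mul_pad v (i : 'I_n) :
  (T *m v) i 0 = a * pad v i.+1 + b * (pad v i + pad v i.+2).
Proof.
rewrite mxE /pad mulrDr !mulr_sumr -!big_split; apply: eq_bigr => k _ /=.
rewrite !mxE -val_eqE /=; move: (i : nat) (k : nat) => I K.
by repeat case: eqP => ? /=; try lia; rewrite ?(mulr0, mul0r, addr0, add0r).
Qed.

Lemma tridiag_eigen_rec v mu : b != 0 -> T *m v = mu *: v ->
  forall k, (k < n)%N -> pad v k.+2 = (mu - a) / b * pad v k.+1 - pad v k.
Proof.
move=> b_neq0 eigen k lt_kn.
have := congr1 (fun M : 'cV_n => M (Ordinal lt_kn) 0) eigen.
rewrite /= tridiag_mul_pad mxE -pad_ord /= => row_k.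
apply: (mulfI b_neq0); rewrite mulrBr mulrA mulrCA mulfV // mulr1 mulrBl -row_k.
ring.
Qed.

Lemma tridiag_eigen_chebU (v : 'cV[L]_n) mu : b != 0 -> v != 0 -> T *m v = mu *: v ->
  (chebU L n.+1).[(mu - a) / b] = 0.
Proof.
move=> b_neq0 v_neq0 eigen.
have pad_cheb := chebU_recurrence (pad0 v) (tridiag_eigen_rec b_neq0 eigen).
have /esym/eqP := pad_cheb n.+1 (leqnn _).
rewrite pad_last mulf_eq0 => /orP[/eqP // | /eqP pad1].
case/eqP: v_neq0; apply/matrixP => i j.
by rewrite (ord1 j) !mxE -pad_ord pad_cheb ?pad1 ?mulr0 // leqW.
Qed.
End TridiagonalEigenvectors.

Lemma map_tridiag (F L : fieldType) (f : {rmorphism F -> L}) n (a b : F) :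
  map_mx f (tridiagT n a b) = tridiagT n (f a) (f b).
Proof.
apply/matrixP => i j; rewrite !mxE.
by case: ifP => _ //; case: ifP => _ //; rewrite rmorph0.
Qed.

(* [I | T] generates an LCD code when T^2 + I has trivial kernel: a codeword
   u [I | T] orthogonal to the code satisfies (I + T^2) u^T = 0 since T is
   symmetric. *)
Lemma lcd_genC (F : fieldType) n (a b : F) :
  (forall w : 'cV[F]_n, tridiagT n a b *m (tridiagT n a b *m w) = - w -> w = 0) ->
  LCD (genC n a b).
Proof.
move=> ker_triv c [u ->] c_dual.
set G := genC n a b; set T := tridiagT n a b.
have GGu : G *m (u *m G)^T = 0.
  apply/row_matrixP => j; rewrite row0 rowE mulmxA; apply: c_dual.
  by exists (delta_mx 0 j).
have T_sym : T^T = T by apply/matrixP => i k; rewrite !mxE [k == i]eq_sym orbC.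
have GG : G *m G^T = 1%:M + T *m T.
  by rewrite /G /genC tr_row_mx mul_row_col trmx1 mulmx1 T_sym.
rewrite trmx_mul mulmxA GG mulmxDl mul1mx -mulmxA in GGu.
have /ker_triv uT0 : T *m (T *m u^T) = - u^T.
  by apply/eqP; rewrite -addr_eq0 addrC GGu.
by rewrite -[u]trmxK uT0 trmx0 mul0mx.
Qed.

(* If A^2 w = -w with w nonzero and i^2 = -1, then A has an eigenvector for
   a square root of -1 (namely i, or -i for A w - i w). *)
Lemma eigen_of_sqr_neg1 (L : fieldType) n (A : 'M[L]_n) (i : L) (w : 'cV_n) :
  i ^+ 2 = -1 -> w != 0 -> A *m (A *m w) = - w ->
  exists e (y : 'cV_n), [/\ e ^+ 2 = -1, y != 0 & A *m y = e *: y].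
Proof.
move=> i2 w_neq0 AAw.
pose y := A *m w - i *: w.
have [y0 | y_neq0] := eqVneq y 0.
  by exists i, w; split=> //; apply/eqP; rewrite -subr_eq0 -y0.
exists (- i), y; split=> //; first by rewrite sqrrN.
rewrite /y mulmxBr AAw -scalemxAr scalerBr scalerA mulNr -expr2 i2 opprK.
by rewrite scale1r scaleNr addrC.
Qed.

Lemma lcd_of_chebU_nonroot (F L : fieldType) (f : {rmorphism F -> L}) (i : L) n (a b : F) :
  i ^+ 2 = -1 -> b != 0 ->
  (forall e : L, e ^+ 2 = -1 -> (chebU L n.+1).[(e - f a) / f b] != 0) ->
  LCD (genC n a b).
Proof.
move=> i2 b_neq0 nonroot; apply: lcd_genC => w TTw.
apply/eqP/negPn/negP => w_neq0.
have fTTw : tridiagT n (f a) (f b) *m (tridiagT n (f a) (f b) *m map_mx f w)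
    = - map_mx f w by rewrite -map_tridiag -!map_mxM TTw map_mxN.
have fw_neq0 : map_mx f w != 0 by rewrite map_mx_eq0.
have [e [y [e2 y_neq0 Ty]]] := eigen_of_sqr_neg1 i2 fw_neq0 fTTw.
by move: (nonroot e e2); rewrite (tridiag_eigen_chebU _ y_neq0 Ty) ?eqxx ?fmorph_eq0.
Qed.

Lemma exists_sqrt_neg1 (F : finFieldType) :
  exists (L : splittingFieldType F) (i : L), i ^+ 2 = -1.
Proof.
have X2_neq0 : ('X^2 + 1 : {poly F}) != 0 by rewrite -polyC1 monic_neq0 ?monicXnaddC.
have [L [rs Drs _]] := FinSplittingFieldFor X2_neq0; exists L.
have map_X2 : map_poly (in_alg L) ('X^2 + 1) = 'X^2 + 1.
  by rewrite rmorphD /= map_polyXn rmorph1.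
case: rs Drs => [|z rs] Drs.
  move/eqp_size: Drs; rewrite big_nil size_poly1 size_map_poly.
  by rewrite size_polyDl ?size_polyXn // size_poly1.
exists z; apply/eqP; rewrite -addr_eq0.
have : root (\prod_(x <- z :: rs) ('X - x%:P)) z by rewrite root_prod_XsubC mem_head.
by rewrite -(eqp_root Drs) /= map_X2 rootE hornerD hornerXn hornerC.
Qed.

Lemma card_roots_image (T : finType) (L : idomainType) (g : T -> L) (V : {poly L}) :
  injective g -> V != 0 -> (#|[set x | root V (g x)]| < size V)%N.
Proof.
move=> g_inj V_neq0; rewrite cardE -(size_map g).
apply: max_poly_roots => //; last by rewrite map_inj_uniq ?enum_uniq.
by apply/allP => y /mapP[x]; rewrite mem_enum inE => root_gx ->.
Qed.

Lemma avoid_affine_roots (F : finFieldType) (L : fieldType) (f : {rmorphism F -> L})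
    (V : {poly L}) (e1 e2 : L) (c : F) :
  V != 0 -> c != 0 -> (2 * (size V).-1 < #|F|)%N ->
  exists a : F, ~~ root V ((e1 - f a) / f c) && ~~ root V ((e2 - f a) / f c).
Proof.
move=> V_neq0 c_neq0 card_F.
pose bad e := [set x : F | root V ((e - f x) / f c)].
have card_bad e : (#|bad e| <= (size V).-1)%N.
  rewrite -ltnS (leq_trans (card_roots_image _ V_neq0)) ?leqSpred // => x y.
  move/(congr1 ( *%R^~ (f c))); rewrite !divfK ?fmorph_eq0 //.
  by move/addrI/oppr_inj/fmorph_inj.
apply/existsP; apply: contraT => /existsPn all_bad.
suff : (#|F| <= 2 * (size V).-1)%N by rewrite leqNgt card_F.
have F_le : (#|F| <= #|bad e1 :|: bad e2|)%N.
  rewrite -cardsT subset_leq_card //; apply/subsetP => x _.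
  by have := all_bad x; rewrite negb_and !negbK !inE.
have := cardsU (bad e1) (bad e2); have := card_bad e1; have := card_bad e2.
lia.
Qed.

Theorem corollary2p6 (F : finFieldType) (p n r m : nat) (b : F) :
  prime p -> odd p -> p \in [pchar F] ->
  b != 0 -> (2 <= n)%N ->
  (p ^ r %| n.+1)%N -> ~~ (p ^ r.+1 %| n.+1)%N ->
  n.+1 = (p ^ r * m.+1)%N ->
  (1 <= r)%N ->
  (2 * m + 4 < #|F|)%N ->
  exists a : F, LCD (genC n a b).
Proof.
move=> _ odd_p char_p b_neq0 _ _ _ En _ card_F.
have [L [i i2]] := exists_sqrt_neg1 F.
pose V := chebU L m.+1 * ('X^2 - 4%:P).
have [V_neq0 V_size] : V != 0 /\ size V = m.+3.
  have [U_monic U_size] := chebU_monic L m.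
  have X2_monic : 'X^2 - 4%:P \is @monic L by rewrite monicXnsubC.
  split; first by rewrite monic_neq0 ?monicMl.
  by rewrite size_monicM ?monic_neq0 // U_size size_XnsubC // addnC.
have [|a /andP[good_i good_neg_i]] :=
  avoid_affine_roots (in_alg L) i (- i) V_neq0 b_neq0; first by rewrite V_size; lia.
exists a; apply: (lcd_of_chebU_nonroot (f := in_alg L) i2 b_neq0) => e e2.
have char_L := rmorph_pchar (in_alg L) char_p.
apply/negP; rewrite En => /eqP /(chebU_pchar_root odd_p char_L).
have /pred2P[-> | ->] : (e == i) || (e == - i) by rewrite -eqf_sqr e2 i2.
all: exact/negP.
Qed.
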